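(* Let $G$ be a connected undirected simple graph on $n$ vertices with edge set $\mathcal E$ and nominal positive edge weights $\{\omega_{0,ij}\}_{\{i,j\}\in\mathcal E}$, with Laplacian $L_0$. For each edge let $\alpha_{\omega_{ij}}\in[0,1)$, and let $L$ be the Laplacian of the same graph with weights $\omega_{ij}$ satisfying $(1-\alpha_{\omega_{ij}})\omega_{0,ij}\le\omega_{ij}\le(1+\alpha_{\omega_{ij}})\omega_{0,ij}$. Put $\Delta=\sum_{\{i,j\}\in\mathcal E}\alpha_{\omega_{ij}}\omega_{0,ij}(e_i-e_j)(e_i-e_j)^\top$ and $a=\|L_0^\dagger\Delta\|$ (spectral norm), and assume $a<1$. Then $$(1-a)L_0\preceq L\preceq(1+a)L_0,$$ and, with zero time delay, the steady-state covariances $\Sigma=\frac12b^2L^\dagger$ and $\Sigma_0=\frac12b^2L_0^\dagger$ (same $b$) satisfy $(1-\varepsilon_\omega^-)\Sigma_0\preceq\Sigma\preceq(1+\varepsilon_\omega^+)\Sigma_0$, where $\varepsilon_\omega^-=\frac{\|\Delta L_0^\dagger\|}{1+\|\Delta L_0^\dagger\|}$ and $\varepsilon_\omega^+=\frac{\|\Delta L_0^\dagger\|}{1-\|\Delta L_0^\dagger\|}$.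
   Context: The Laplacian of a weighted graph with weights $\omega_{ij}$ is $L=\sum_{\{i,j\}\in\mathcal E}\omega_{ij}(e_i-e_j)(e_i-e_j)^\top$, where $e_k$ are standard basis vectors. $L^\dagger$ is the Moore–Penrose pseudoinverse. For zero delay, the network $\mathrm dx_t=-Lx_t\,\mathrm dt+b\,\mathrm dw_t$ ($w_t$ standard Brownian motion, $b\neq0$) has observables $y=(I_n-\frac1n\mathbf 1\mathbf 1^\top)x$ with steady-state law $\mathcal N(0,\frac12b^2L^\dagger)$. $A\preceq B$ means $B-A$ is positive semidefinite. *)

From HB Require Import structures.
From mathcomp Require Import all_boot all_order all_algebra.
From mathcomp Require Import boolp classical_sets reals.
Set Implicit Arguments. Unset Strict Implicit. Unset Printing Implicit Defensive.
Import Order.TTheory GRing.Theory Num.Theory.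
Local Open Scope ring_scope.
Local Open Scope classical_set_scope.

Section Defs.
Variable R : realType.

Definition basis_vec n (i : 'I_n) : 'cV[R]_n := delta_mx i 0.

Definition edge_mx n (i j : 'I_n) : 'M[R]_n :=
  (basis_vec i - basis_vec j) *m (basis_vec i - basis_vec j)^T.

Definition simple_graph n (adj : rel 'I_n) : Prop :=
  (forall i, ~~ adj i i) /\ (forall i j, adj i j = adj j i).

Definition connected_graph n (adj : rel 'I_n) : Prop :=
  forall i j, connect adj i j.

(* Weighted Laplacian: each undirected edge {i,j} is counted once, as the
   ordered pair with i < j; the weight of {i,j} is w i j for i < j. *)
Definition laplacian n (adj : rel 'I_n) (w : 'I_n -> 'I_n -> R) : 'M[R]_n :=
  \sum_(i < n) \sum_(j < n | (i < j)%N && adj i j) w i j *: edge_mx i j.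

Definition penrose m n (A : 'M[R]_(m, n)) (X : 'M[R]_(n, m)) : Prop :=
  [/\ A *m X *m A = A, X *m A *m X = X,
      (A *m X)^T = A *m X & (X *m A)^T = X *m A].

(* Moore-Penrose pseudoinverse: the (unique, existing) X satisfying the
   Penrose conditions. *)
Definition pinv m n (A : 'M[R]_(m, n)) : 'M[R]_(n, m) :=
  xget 0 [set X | penrose A X].

Definition norm2 n (x : 'cV[R]_n) : R := Num.sqrt (\sum_i x i 0 ^+ 2).

Definition spec_norm m n (A : 'M[R]_(m, n)) : R :=
  sup [set norm2 (A *m x) | x in [set x : 'cV[R]_n | norm2 x = 1]].

Definition psd n (A : 'M[R]_n) : Prop :=
  A^T = A /\ forall x : 'cV[R]_n, 0 <= (x^T *m A *m x) 0 0.

Definition loewner_le n (A B : 'M[R]_n) : Prop := psd (B - A).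

Definition steady_cov n (b : R) (L : 'M[R]_n) : 'M[R]_n :=
  (b ^+ 2 / 2) *: pinv L.

End Defs.

From mathcomp Require Import all_boot all_order all_algebra.
From mathcomp Require Import classical_sets reals.
From mathcomp Require Import ring lra.
Set Implicit Arguments. Unset Strict Implicit. Unset Printing Implicit Defensive.
Import Order.TTheory GRing.Theory Num.Theory.
Local Open Scope ring_scope.
Local Open Scope classical_set_scope.

(* Let T = L0^+ Delta.  Since L0 T = Delta is symmetric, T is self-adjoint for
   the semi-inner product <u, v> = u^T L0 v, so by Cauchy-Schwarz the moments
   m_j = <x, T^j x> satisfy m_j^2 <= m_0 m_(2j).  Iterating,
   (m_1 / m_0)^(2^e) <= m_(2^e) / m_0 = O(||T||^(2^e)) for all e, which forces
   x^T Delta x = m_1 <= ||T|| m_0 = a x^T L0 x.  Edge by edge,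
   |x^T L x - x^T L0 x| <= x^T Delta x, hence (1 - a) L0 <= L <= (1 + a) L0.
   For PSD M, x^T M^+ x = max_u (2 u^T M M^+ x - u^T M u); as L and L0 have
   the same kernel (the constants, by connectivity), M M^+ is the same
   projector for both, so s L0 <= L implies s L^+ <= L0^+.  Finally
   ||Delta L0^+|| = ||(L0^+ Delta)^T|| = a, 1 - a/(1 + a) = 1/(1 + a) and
   1 + a/(1 - a) = 1/(1 - a). *)

Section RealMatrices.
Variable R : realType.

Definition dot n (u v : 'cV[R]_n) : R := (u^T *m v) 0 0.

(* Literally the form in [psd], so [psd M] unfolds to
   [M^T = M /\ forall x, 0 <= qf M x]. *)
Definition qf n (M : 'M[R]_n) (x : 'cV[R]_n) : R := (x^T *m M *m x) 0 0.

Lemma dotE n (u v : 'cV[R]_n) : dot u v = \sum_k u k 0 * v k 0.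
Proof. by rewrite /dot mxE; apply: eq_bigr => k _; rewrite mxE. Qed.

Lemma dotC n (u v : 'cV[R]_n) : dot u v = dot v u.
Proof. by rewrite !dotE; apply: eq_bigr => k _; rewrite mulrC. Qed.

Lemma dotDr n (u v w : 'cV[R]_n) : dot u (v + w) = dot u v + dot u w.
Proof. by rewrite /dot mulmxDr mxE. Qed.

Lemma dotZr n c (u v : 'cV[R]_n) : dot u (c *: v) = c * dot u v.
Proof. by rewrite /dot -scalemxAr mxE. Qed.

Lemma dotDl n (u v w : 'cV[R]_n) : dot (v + w) u = dot v u + dot w u.
Proof. by rewrite dotC dotDr !(dotC u). Qed.

Lemma dotZl n c (u v : 'cV[R]_n) : dot (c *: u) v = c * dot u v.
Proof. by rewrite dotC dotZr dotC. Qed.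

Lemma dot0r n (u : 'cV[R]_n) : dot u 0 = 0.
Proof. by rewrite /dot mulmx0 mxE. Qed.

Lemma dotxx_ge0 n (x : 'cV[R]_n) : 0 <= dot x x.
Proof. by rewrite dotE sumr_ge0 // => k _; rewrite -expr2 sqr_ge0. Qed.

Lemma dot_mulmxr m n (M : 'M[R]_(m, n)) u v : dot u (M *m v) = dot (M^T *m u) v.
Proof. by rewrite /dot trmx_mul trmxK mulmxA. Qed.

Lemma dot_symmx n (M : 'M[R]_n) u v : M^T = M -> dot u (M *m v) = dot v (M *m u).
Proof. by move=> MT; rewrite dot_mulmxr MT dotC. Qed.

Lemma qfE n (M : 'M[R]_n) x : qf M x = dot x (M *m x).
Proof. by rewrite /qf /dot mulmxA. Qed.

Lemma qfD n (M N : 'M[R]_n) x : qf (M + N) x = qf M x + qf N x.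
Proof. by rewrite !qfE mulmxDl dotDr. Qed.

Lemma qfZ n c (M : 'M[R]_n) x : qf (c *: M) x = c * qf M x.
Proof. by rewrite !qfE -scalemxAl dotZr. Qed.

Lemma qfB n (M N : 'M[R]_n) x : qf (M - N) x = qf M x - qf N x.
Proof. by rewrite qfD -scaleN1r qfZ mulN1r. Qed.

Lemma qf_sum n I (r : seq I) (P : pred I) (F : I -> 'M[R]_n) x :
  qf (\sum_(i <- r | P i) F i) x = \sum_(i <- r | P i) qf (F i) x.
Proof.
elim/big_rec2: _ => [|i y1 y2 _ <-]; first by rewrite qfE mul0mx dot0r.
by rewrite qfD.
Qed.

Lemma qf_scalev n (M : 'M[R]_n) c x : qf M (c *: x) = c ^+ 2 * qf M x.
Proof. by rewrite !qfE -scalemxAr dotZl dotZr mulrA expr2. Qed.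

Lemma qf_addv n (M : 'M[R]_n) u v : M^T = M ->
  qf M (u + v) = qf M u + 2 * dot u (M *m v) + qf M v.
Proof.
by move=> MT; rewrite !qfE mulmxDr !dotDl !dotDr (dot_symmx v u MT); ring.
Qed.

Lemma psd_cauchy_schwarz n (M : 'M[R]_n) u v :
  psd M -> dot u (M *m v) ^+ 2 <= qf M u * qf M v.
Proof.
case=> MT M_ge0.
have qf_comb (s t : R) : qf M (s *: u + t *: v)
    = s ^+ 2 * qf M u + 2 * s * t * dot u (M *m v) + t ^+ 2 * qf M v.
  by rewrite qf_addv // !qf_scalev -scalemxAr dotZl dotZr; ring.
set p := qf M u; set r := qf M v; set d := dot u (M *m v).
have nonneg s t : 0 <= s ^+ 2 * p + 2 * s * t * d + t ^+ 2 * r.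
  by rewrite -qf_comb; apply: M_ge0.
(* Test vectors r u - d v, p v - d u and u - d v, for r > 0, p > 0, p = r = 0. *)
have [r_gt0|r_le0] := ltrP 0 r; first by have := nonneg r (- d); nra.
have [p_gt0|p_le0] := ltrP 0 p; first by have := nonneg (- d) p; nra.
by have := nonneg 1 (- d); nra.
Qed.

Lemma dot_cauchy_schwarz n (u v : 'cV[R]_n) : dot u v ^+ 2 <= dot u u * dot v v.
Proof.
have psd1 : psd (1%:M : 'M[R]_n).
  by split=> [|x]; [exact: trmx1 | rewrite -/(qf _ x) qfE mul1mx dotxx_ge0].
by have := psd_cauchy_schwarz u v psd1; rewrite !qfE !mul1mx.
Qed.

Lemma norm2E n (x : 'cV[R]_n) : norm2 x = Num.sqrt (dot x x).
Proof.
by rewrite /norm2 dotE; congr Num.sqrt; apply: eq_bigr => k _; rewrite expr2.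
Qed.

Lemma norm2_ge0 n (x : 'cV[R]_n) : 0 <= norm2 x.
Proof. by rewrite norm2E sqrtr_ge0. Qed.

Lemma norm2_sqr n (x : 'cV[R]_n) : norm2 x ^+ 2 = dot x x.
Proof. by rewrite norm2E sqr_sqrtr ?dotxx_ge0. Qed.

Lemma norm2Z n c (x : 'cV[R]_n) : norm2 (c *: x) = `|c| * norm2 x.
Proof.
by rewrite !norm2E dotZl dotZr mulrA -expr2 sqrtrM ?sqr_ge0 // sqrtr_sqr.
Qed.

Lemma norm2_eq0 n (x : 'cV[R]_n) : (norm2 x == 0) = (x == 0).
Proof.
apply/eqP/eqP => [|->]; last by rewrite norm2E dot0r sqrtr0.
rewrite norm2E => /eqP; rewrite sqrtr_eq0 le_eqVlt ltNge dotxx_ge0 orbF dotE.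
move=> /eqP /psumr_eq0P sq0; apply/matrixP => i j; rewrite ord1 mxE.
by apply/eqP; rewrite -sqrf_eq0 expr2 sq0 // => k _; rewrite -expr2 sqr_ge0.
Qed.

Lemma dot_le_norm2 n (u v : 'cV[R]_n) : dot u v <= norm2 u * norm2 v.
Proof.
rewrite !norm2E -sqrtrM ?dotxx_ge0 //; apply: le_trans (ler_norm _) _.
by rewrite -sqrtr_sqr ler_sqrt ?dot_cauchy_schwarz // mulr_ge0 ?dotxx_ge0.
Qed.

Lemma norm2_normalize n (x : 'cV[R]_n) : x != 0 -> norm2 ((norm2 x)^-1 *: x) = 1.
Proof.
rewrite -norm2_eq0 => x_neq0.
by rewrite norm2Z ger0_norm ?invr_ge0 ?norm2_ge0 // mulVf.
Qed.

Section SpectralNorm.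
Variables m n : nat.

Let image_sphere (M : 'M[R]_(m, n.+1)) :=
  [set norm2 (M *m x) | x in [set x : 'cV[R]_n.+1 | norm2 x = 1]].

Lemma spec_norm_has_sup (M : 'M[R]_(m, n.+1)) : has_sup (image_sphere M).
Proof.
split.
  set e0 : 'cV[R]_n.+1 := delta_mx 0 0.
  have e0_neq0 : e0 != 0.
    apply/eqP => /matrixP /(_ 0 0) /eqP.
    by rewrite !mxE !eqxx oner_eq0.
  by exists (norm2 (M *m ((norm2 e0)^-1 *: e0))), ((norm2 e0)^-1 *: e0);
    rewrite //= norm2_normalize.
exists (Num.sqrt (\sum_i dot (row i M)^T (row i M)^T)) => _ [x /= x1 <-].
rewrite norm2E ler_sqrt; last by rewrite sumr_ge0 // => i _; apply: dotxx_ge0.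
rewrite dotE; apply: ler_sum => i _.
have -> : (M *m x) i 0 = dot (row i M)^T x.
  by rewrite mxE dotE; apply: eq_bigr => k _; rewrite !mxE.
have := dot_cauchy_schwarz (row i M)^T x.
by rewrite -[dot x x]norm2_sqr x1 expr1n mulr1.
Qed.

Lemma spec_norm_ge0 (M : 'M[R]_(m, n.+1)) : 0 <= spec_norm M.
Proof.
have [[_ [x x1 _]] _] := spec_norm_has_sup M.
apply: le_trans (norm2_ge0 (M *m x)) _.
by apply: sup_upper_bound; [apply: spec_norm_has_sup | exists x].
Qed.

Lemma norm2_mulmx_le (M : 'M[R]_(m, n.+1)) x :
  norm2 (M *m x) <= spec_norm M * norm2 x.
Proof.
have [->|x_neq0] := eqVneq x 0.
  by rewrite mulmx0 !norm2E !dot0r sqrtr0 mulr0.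
have x_gt0 : 0 < norm2 x by rewrite lt0r norm2_eq0 x_neq0 norm2_ge0.
have : norm2 (M *m ((norm2 x)^-1 *: x)) <= spec_norm M.
  apply: sup_upper_bound; first exact: spec_norm_has_sup.
  by exists ((norm2 x)^-1 *: x); rewrite /= ?norm2_normalize.
rewrite -scalemxAr norm2Z ger0_norm ?invr_ge0 ?norm2_ge0 //.
by rewrite mulrC ler_pdivrMr.
Qed.

Lemma spec_norm_le (M : 'M[R]_(m, n.+1)) c :
  (forall x, norm2 (M *m x) <= c * norm2 x) -> spec_norm M <= c.
Proof.
move=> Mc; apply: ge_sup; first by case: (spec_norm_has_sup M).
by move=> _ [x /= x1 <-]; rewrite -[c]mulr1 -x1.
Qed.

End SpectralNorm.

Lemma spec_norm_tr m n (M : 'M[R]_(m.+1, n.+1)) : spec_norm M^T = spec_norm M.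
Proof.
suff le_tr p q (N : 'M[R]_(p.+1, q.+1)) : spec_norm N^T <= spec_norm N.
  by apply/eqP; rewrite eq_le le_tr -{1}(trmxK M) le_tr.
apply: spec_norm_le => x.
have [y0|y_neq0] := eqVneq (norm2 (N^T *m x)) 0.
  by rewrite y0 mulr_ge0 ?spec_norm_ge0 ?norm2_ge0.
have y_gt0 : 0 < norm2 (N^T *m x) by rewrite lt0r y_neq0 norm2_ge0.
rewrite -(ler_pM2r y_gt0) -expr2 norm2_sqr -dot_mulmxr.
apply: le_trans (dot_le_norm2 _ _) _.
by rewrite -mulrA mulrCA ler_wpM2l ?norm2_ge0 // norm2_mulmx_le.
Qed.

Lemma norm2_exp_mulmx_le n (T : 'M[R]_n.+1) j x :
  norm2 (T ^+ j *m x) <= spec_norm T ^+ j * norm2 x.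
Proof.
elim: j => [|j IH]; first by rewrite expr0 mul1mx mul1r.
rewrite exprS -mulmxE -mulmxA exprS -mulrA.
by apply: le_trans (norm2_mulmx_le _ _) _; rewrite ler_wpM2l ?spec_norm_ge0.
Qed.

Lemma bernoulli_ineq (h : R) k : 0 <= h -> 1 + k%:R * h <= (1 + h) ^+ k.
Proof.
move=> h_ge0; elim: k => [|k IH]; first by rewrite mul0r addr0 expr0.
have kh_ge0 : 0 <= k%:R * h by rewrite mulr_ge0.
rewrite exprS -natr1; nra.
Qed.

Lemma le_of_exp2_bounded (r s C : R) :
  0 <= s -> (forall e, r ^+ (2 ^ e) <= C * s ^+ (2 ^ e)) -> r <= s.
Proof.
move=> s_ge0 r_le; rewrite leNgt; apply/negP => s_lt_r.
have [s0|s_neq0] := eqVneq s 0.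
  by move: s_lt_r (r_le 0%N); rewrite s0 !expr1 mulr0 => /lt_geF ->.
have s_gt0 : 0 < s by rewrite lt0r s_neq0.
have rs_gt1 : 1 < r / s by rewrite ltr_pdivlMr // mul1r.
set h := r / s - 1; have h_gt0 : 0 < h by rewrite subr_gt0.
have lin_le e : 1 + e%:R * h <= C.
  apply: le_trans (bernoulli_ineq e (ltW h_gt0)) _.
  rewrite addrC subrK; apply: le_trans (_ : _ <= (r / s) ^+ (2 ^ e)) _.
    by rewrite ler_eXn2l // ltnW // ltn_expl.
  by rewrite expr_div_n ler_pdivrMr ?exprn_gt0.
set e := Num.bound (`|C| / h).
have := archi_boundP (divr_ge0 (normr_ge0 C) (ltW h_gt0)); rewrite -/e.
by rewrite ltr_pdivrMr //; have := lin_le e; have := ler_norm C; lra.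
Qed.

Lemma exp2_le_of_sqr_le (f : nat -> R) : 0 <= f 1%N ->
  (forall j, f j ^+ 2 <= f (j + j)%N) ->
  forall e, f 1%N ^+ (2 ^ e) <= f (2 ^ e)%N.
Proof.
move=> f1_ge0 f_sqr; elim=> [|e IH]; first by rewrite expr1.
rewrite expnS mul2n -addnn exprD; apply: le_trans (f_sqr _).
by rewrite expr2 ler_pM ?exprn_ge0.
Qed.

Section Rayleigh.
Variables (n : nat) (A T : 'M[R]_n.+1).
Hypotheses (A_psd : psd A) (AT_sym : (A *m T)^T = A *m T).

Lemma dot_selfadjoint u v : dot (T *m u) (A *m v) = dot u (A *m (T *m v)).
Proof.
have TtA : T^T *m A = A *m T by rewrite -AT_sym trmx_mul; case: A_psd => ->.
by rewrite dotC dot_mulmxr mulmxA TtA -mulmxA dotC.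
Qed.

Let moment x j := dot x (A *m (T ^+ j *m x)).

Lemma moment_shift x i j :
  dot (T ^+ i *m x) (A *m (T ^+ j *m x)) = moment x (i + j).
Proof.
elim: i j => [|i IH] j; first by rewrite expr0 mul1mx.
rewrite exprS -mulmxE -mulmxA dot_selfadjoint (mulmxA T) mulmxE -exprS.
by rewrite IH addSnnS.
Qed.

Lemma moment_sqr_le x j : moment x j ^+ 2 <= moment x 0 * moment x (j + j).
Proof.
have := psd_cauchy_schwarz x (T ^+ j *m x) A_psd.
by rewrite !qfE moment_shift /moment expr0 mul1mx.
Qed.

Lemma moment_le x j : moment x j <= norm2 (A *m x) * norm2 x * spec_norm T ^+ j.
Proof.
rewrite /moment dot_symmx; last by case: A_psd.
rewrite dotC; apply: le_trans (dot_le_norm2 _ _) _.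
by rewrite -mulrA ler_wpM2l ?norm2_ge0 // mulrC norm2_exp_mulmx_le.
Qed.

Lemma qf_le_spec_norm x : qf (A *m T) x <= spec_norm T * qf A x.
Proof.
have -> : qf (A *m T) x = moment x 1 by rewrite qfE /moment expr1 mulmxA.
have -> : qf A x = moment x 0 by rewrite qfE /moment expr0 mul1mx.
have [m0_gt0|m0_le0] := ltrP 0 (moment x 0); last first.
  have m0_ge0 : 0 <= moment x 0.
    by rewrite /moment expr0 mul1mx -qfE; exact: A_psd.2.
  have m00 : moment x 0 = 0 by apply/le_anti; rewrite m0_le0 m0_ge0.
  have := moment_sqr_le x 1; rewrite m00 mul0r mulr0 exprn_even_le0 //=.
  by move=> /eqP ->.
have [m1_lt0|m1_ge0] := ltrP (moment x 1) 0.
  by apply: le_trans (ltW m1_lt0) _; rewrite mulr_ge0 ?spec_norm_ge0 // ltW.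
pose f j := moment x j / moment x 0.
have f1_ge0 : 0 <= f 1%N by rewrite /f divr_ge0 // ltW.
have f_sqr j : f j ^+ 2 <= f (j + j)%N.
  rewrite /f expr_div_n ler_pdivrMr ?exprn_gt0 // expr2 mulrA divfK ?gt_eqF //.
  by rewrite -expr2 [X in _ <= X]mulrC moment_sqr_le.
rewrite -ler_pdivrMr //.
apply: (@le_of_exp2_bounded _ _ (norm2 (A *m x) * norm2 x / moment x 0)) => [|e].
  exact: spec_norm_ge0.
apply: le_trans (exp2_le_of_sqr_le f1_ge0 f_sqr e) _.
by rewrite /f mulrAC ler_pM2r ?invr_gt0 // moment_le.
Qed.

End Rayleigh.

Lemma qf_le_spec_norm_mul n (A X B : 'M[R]_n.+1) x :
  psd A -> B^T = B -> A *m X *m B = B -> qf B x <= spec_norm (X *m B) * qf A x.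
Proof.
move=> A_psd B_sym AXB; rewrite -{1}AXB -mulmxA.
by apply: qf_le_spec_norm; rewrite // mulmxA AXB.
Qed.

Section Laplacian.
Variables (n : nat) (adj : rel 'I_n).
Implicit Types (w : 'I_n -> 'I_n -> R) (x : 'cV[R]_n).

Lemma laplacian_tr w : (laplacian adj w)^T = laplacian adj w.
Proof.
rewrite /laplacian raddf_sum; apply: eq_bigr => i _; rewrite raddf_sum.
by apply: eq_bigr => j _; rewrite /= linearZ /= /edge_mx trmx_mul trmxK.
Qed.

Lemma qf_edge_mx (i j : 'I_n) x : qf (edge_mx R i j) x = (x i 0 - x j 0) ^+ 2.
Proof.
set v := basis_vec R i - basis_vec R j.
have vx : (v^T *m x) 0 0 = x i 0 - x j 0.
  by rewrite linearB /= mulmxBl !trmx_delta -!rowE !mxE.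
have xv : (x^T *m v) 0 0 = x i 0 - x j 0.
  by rewrite -[x^T *m v]trmxK trmx_mul trmxK mxE.
by rewrite /qf /edge_mx -/v !mulmxA -mulmxA mxE big_ord1 xv vx expr2.
Qed.

Lemma qf_laplacian w x : qf (laplacian adj w) x =
  \sum_(i < n) \sum_(j < n | (i < j)%N && adj i j) w i j * (x i 0 - x j 0) ^+ 2.
Proof.
rewrite /laplacian qf_sum; apply: eq_bigr => i _; rewrite qf_sum.
by apply: eq_bigr => j _; rewrite qfZ qf_edge_mx.
Qed.

Lemma laplacian_mul_const p w c : laplacian adj w *m (const_mx c : 'M_(n, p)) = 0.
Proof.
rewrite /laplacian mulmx_suml big1 // => i _; rewrite mulmx_suml big1 // => j _.
rewrite -scalemxAl /edge_mx -mulmxA.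
suff -> : (basis_vec R i - basis_vec R j)^T *m (const_mx c : 'M_(n, p)) = 0.
  by rewrite mulmx0 scaler0.
by rewrite linearB /= mulmxBl !trmx_delta -!rowE !row_const subrr.
Qed.

Lemma laplacian_psd w :
  (forall i j : 'I_n, (i < j)%N -> adj i j -> 0 <= w i j) -> psd (laplacian adj w).
Proof.
move=> w_ge0; split=> [|x]; first exact: laplacian_tr.
rewrite -/(qf _ x) qf_laplacian; apply: sumr_ge0 => i _.
by apply: sumr_ge0 => j /andP[ij e]; rewrite mulr_ge0 ?sqr_ge0 ?w_ge0.
Qed.

Lemma qf_laplacian_dist w w' d x :
  (forall i j : 'I_n, (i < j)%N -> adj i j -> `|w i j - w' i j| <= d i j) ->
  `|qf (laplacian adj w) x - qf (laplacian adj w') x| <= qf (laplacian adj d) x.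
Proof.
move=> wd; rewrite !qf_laplacian -sumrB.
apply: le_trans (ler_norm_sum _ _ _) _; apply: ler_sum => i _; rewrite -sumrB.
apply: le_trans (ler_norm_sum _ _ _) _; apply: ler_sum => j /andP[ij e].
by rewrite -mulrBl normrM [`|_ ^+ 2|]ger0_norm ?sqr_ge0 // ler_wpM2r ?sqr_ge0 ?wd.
Qed.

Lemma laplacian_ker w x : simple_graph adj -> connected_graph adj ->
  (forall i j : 'I_n, (i < j)%N -> adj i j -> 0 < w i j) ->
  laplacian adj w *m x = 0 -> forall i j, x i 0 = x j 0.
Proof.
move=> [irr adj_sym] conn w_gt0 Lx0.
pose t i j := w i j * (x i 0 - x j 0) ^+ 2.
have t_ge0 (i j : 'I_n) : (i < j)%N && adj i j -> 0 <= t i j.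
  by case/andP=> ij e; rewrite mulr_ge0 ?sqr_ge0 // ltW ?w_gt0.
have edge_eq (i j : 'I_n) : (i < j)%N -> adj i j -> x i 0 = x j 0.
  move=> ij e; have : qf (laplacian adj w) x = 0 by rewrite qfE Lx0 dot0r.
  rewrite qf_laplacian => /(psumr_eq0P (fun i _ => sumr_ge0 _ (t_ge0 i))).
  move=> /(_ i isT).
  move=> /(psumr_eq0P (t_ge0 i))/(_ j); rewrite ij e => /(_ isT)/eqP.
  by rewrite mulf_eq0 gt_eqF ?w_gt0 //= sqrf_eq0 subr_eq0 => /eqP.
have adj_eq (i j : 'I_n) : adj i j -> x i 0 = x j 0.
  case: (ltngtP i j) => [ij e|ji e|/val_inj ->//]; first exact: edge_eq.
  by rewrite (edge_eq j i) // adj_sym.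
move=> i j; have /connectP [p ip ->] := conn i j.
by elim: p i ip => [|k p IH] i //= /andP[ik kp]; rewrite (adj_eq _ _ ik) IH.
Qed.

End Laplacian.

Lemma penrose_uniq m n (A : 'M[R]_(m, n)) X Y :
  penrose A X -> penrose A Y -> X = Y.
Proof.
move=> [AXA XAX AX_sym XA_sym] [AYA YAY AY_sym YA_sym].
have XE : X = X *m A *m Y.
  transitivity (X *m ((A *m Y) *m (A *m X))^T).
    by rewrite mulmxA AYA AX_sym mulmxA XAX.
  by rewrite trmx_mul AX_sym AY_sym !mulmxA XAX.
have YE : Y = X *m A *m Y.
  transitivity (((Y *m A) *m (X *m A))^T *m Y).
    by rewrite -mulmxA (mulmxA A) AXA YA_sym YAY.
  by rewrite trmx_mul XA_sym YA_sym -!mulmxA (mulmxA Y) YAY.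
by rewrite XE -YE.
Qed.

Lemma penrose_tr m n (A : 'M[R]_(m, n)) X : penrose A X -> penrose A^T X^T.
Proof.
move=> [AXA XAX AX_sym XA_sym].
by split; rewrite -!trmx_mul ?trmxK ?mulmxA ?AXA ?XAX.
Qed.

Lemma pinv_eq m n (A : 'M[R]_(m, n)) X : penrose A X -> pinv A = X.
Proof.
move=> AX; apply: (penrose_uniq _ AX).
by apply: (@xgetPex _ 0 [set X | penrose A X]); exists X.
Qed.

Lemma penrose_sym n (A X : 'M[R]_n) : A^T = A -> penrose A X -> X^T = X.
Proof.
move=> A_sym AX; apply: (penrose_uniq _ AX).
by rewrite -{1}A_sym; apply: penrose_tr.
Qed.

Section Centering.
Variable k : nat.
Local Notation N := k.+1.

Definition avg_mx : 'M[R]_N := const_mx N%:R^-1.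

Lemma avg_mx_tr : avg_mx^T = avg_mx.
Proof. exact: trmx_const. Qed.

Lemma avg_mx_const (x : 'cV[R]_N) :
  (forall i j, x i 0 = x j 0) -> avg_mx *m x = x.
Proof.
move=> x_const; apply/matrixP => i j; rewrite ord1 mxE.
rewrite (eq_bigr (fun=> N%:R^-1 * x i 0)) => [|l _]; last first.
  by rewrite mxE (x_const l i).
rewrite sumr_const card_ord -mulrnAl -(mulr_natr N%:R^-1).
by rewrite mulVf ?mul1r ?pnatr_eq0.
Qed.

Lemma avg_mx_idem : avg_mx *m avg_mx = avg_mx.
Proof.
apply/matrixP => i j; rewrite !mxE (eq_bigr (fun=> N%:R^-1 * N%:R^-1)) => [|l _].
  rewrite sumr_const card_ord -mulrnAl -(mulr_natr N%:R^-1).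
  by rewrite mulVf ?mul1r ?pnatr_eq0.
by rewrite !mxE.
Qed.

Variable L : 'M[R]_N.
Hypotheses (L_sym : L^T = L) (L_avg : L *m avg_mx = 0).
Hypothesis L_ker : forall x : 'cV[R]_N, L *m x = 0 -> forall i j, x i 0 = x j 0.

Lemma avg_mx_mul : avg_mx *m L = 0.
Proof. by rewrite -[LHS]trmxK trmx_mul L_sym avg_mx_tr L_avg trmx0. Qed.

(* [L] is injective on the zero-sum vectors, which [avg_mx] kills, and
   [avg_mx] is the identity on the constants, which [L] kills; so [K] is
   invertible and [pinv L = K^-1 - avg_mx]. *)
Let K := L + avg_mx.

Lemma K_unit : K \in unitmx.
Proof.
have K_inj (x : 'cV[R]_N) : K *m x = 0 -> x = 0.
  move=> Kx0; have avg_x : avg_mx *m x = 0.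
    move: (congr1 (mulmx avg_mx) Kx0).
    by rewrite mulmxA mulmxDr avg_mx_mul add0r avg_mx_idem mulmx0.
  have Lx0 : L *m x = 0 by move: Kx0; rewrite mulmxDl avg_x addr0.
  by rewrite -(avg_mx_const (L_ker Lx0)).
have K_sym : K^T = K by rewrite linearD /= L_sym avg_mx_tr.
rewrite -row_free_unit; apply: inj_row_free => v vK0.
apply: trmx_inj; rewrite trmx0; apply: K_inj.
by rewrite -{1}K_sym -trmx_mul vK0 trmx0.
Qed.

Let X := invmx K - avg_mx.

Lemma penrose_centered : penrose L X /\ L *m X = 1%:M - avg_mx.
Proof.
have KA : K *m avg_mx = avg_mx by rewrite mulmxDl L_avg add0r avg_mx_idem.
have AK : avg_mx *m K = avg_mx by rewrite mulmxDr avg_mx_mul add0r avg_mx_idem.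
have KiA : invmx K *m avg_mx = avg_mx.
  by rewrite -{1}KA mulmxA mulVmx ?K_unit ?mul1mx.
have AKi : avg_mx *m invmx K = avg_mx.
  by rewrite -{1}AK -mulmxA mulmxV ?K_unit ?mulmx1.
have L_K : L = K - avg_mx by rewrite addrK.
have LX : L *m X = 1%:M - avg_mx.
  rewrite L_K /X mulmxBl !mulmxBr mulmxV ?K_unit // KA AKi avg_mx_idem.
  by rewrite subrr subr0.
have XL : X *m L = 1%:M - avg_mx.
  rewrite L_K /X mulmxBl !mulmxBr mulVmx ?K_unit // KiA AK avg_mx_idem.
  by rewrite subrr subr0.
have P_sym : (1%:M - avg_mx)^T = 1%:M - avg_mx.
  by rewrite linearB /= trmx1 avg_mx_tr.
split=> //; split; rewrite ?LX ?XL // mulmxBl mul1mx.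
  by rewrite avg_mx_mul subr0.
by rewrite /X mulmxBr AKi avg_mx_idem subrr subr0.
Qed.

Lemma pinv_centered : penrose L (pinv L) /\ L *m pinv L = 1%:M - avg_mx.
Proof. by case: penrose_centered => LX LXE; rewrite (pinv_eq LX). Qed.

End Centering.

Lemma qf_mulmx_pinv n (M : 'M[R]_n) x :
  M^T = M -> penrose M (pinv M) -> qf M (pinv M *m x) = qf (pinv M) x.
Proof.
move=> M_sym MX; have X_sym := penrose_sym M_sym MX; case: MX => _ XMX _ _.
by rewrite !qfE -{1}X_sym -dot_mulmxr !mulmxA XMX.
Qed.

Lemma qf_pinv_ge n (M : 'M[R]_n) u x : psd M -> penrose M (pinv M) ->
  2 * dot u (M *m pinv M *m x) - qf M u <= qf (pinv M) x.
Proof.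
case=> M_sym M_ge0 MX; have := M_ge0 (u + (-1) *: (pinv M *m x)).
rewrite -/(qf _ _) qf_addv // qf_scalev qf_mulmx_pinv // -scalemxAr dotZr mulmxA.
by rewrite sqrrN expr1n mul1r; lra.
Qed.

Lemma qf_pinv_antitone n (A L : 'M[R]_n) s :
  psd A -> psd L -> penrose A (pinv A) -> penrose L (pinv L) ->
  A *m pinv A = L *m pinv L -> 0 <= s -> (forall x, s * qf A x <= qf L x) ->
  forall x, s * qf (pinv L) x <= qf (pinv A) x.
Proof.
move=> A_psd L_psd A_pinv L_pinv AA_LL s_ge0 AL x.
rewrite -(qf_mulmx_pinv x L_psd.1 L_pinv); set y := pinv L *m x.
have := qf_pinv_ge (s *: y) x A_psd A_pinv.
rewrite AA_LL -mulmxA -/y dotZl -qfE qf_scalev expr2 -mulrA.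
by have := ler_wpM2l s_ge0 (AL y); lra.
Qed.

Lemma laplacian_pinv k (adj : rel 'I_k.+1) w :
  simple_graph adj -> connected_graph adj ->
  (forall i j : 'I_k.+1, (i < j)%N -> adj i j -> 0 < w i j) ->
  [/\ psd (laplacian adj w), penrose (laplacian adj w) (pinv (laplacian adj w))
    & laplacian adj w *m pinv (laplacian adj w) = 1%:M - avg_mx k].
Proof.
move=> adj_simple adj_conn w_gt0.
have /pinv_centered[] := laplacian_ker adj_simple adj_conn w_gt0.
- exact: laplacian_tr.
- exact: laplacian_mul_const.
by split=> //; apply: laplacian_psd => i j ij e; rewrite ltW ?w_gt0.
Qed.

Lemma centering_laplacian k (adj : rel 'I_k.+1) w :
  (1%:M - avg_mx k) *m laplacian adj w = laplacian adj w.
Proof.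
rewrite mulmxBl mul1mx avg_mx_mul ?subr0 //.
  exact: laplacian_tr.
exact: laplacian_mul_const.
Qed.

Lemma qf_pinv_sandwich n (A L : 'M[R]_n) a :
  psd A -> psd L -> penrose A (pinv A) -> penrose L (pinv L) ->
  A *m pinv A = L *m pinv L -> 0 <= a < 1 ->
  (forall x, (1 - a) * qf A x <= qf L x <= (1 + a) * qf A x) ->
  forall x, (1 + a)^-1 * qf (pinv A) x <= qf (pinv L) x
              <= (1 - a)^-1 * qf (pinv A) x.
Proof.
move=> A_psd L_psd A_pinv L_pinv AA_LL /andP[a_ge0 a_lt1] AL x.
apply/andP; split.
  apply: qf_pinv_antitone L_psd A_psd L_pinv A_pinv (esym AA_LL) _ _ x.
    by rewrite invr_ge0; lra.
  by move=> y; rewrite ler_pdivrMl; [case/andP: (AL y) | lra].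
rewrite ler_pdivlMl; last lra.
apply: qf_pinv_antitone A_psd L_psd A_pinv L_pinv AA_LL _ _ x; first lra.
by move=> y; case/andP: (AL y).
Qed.

Lemma loewner_le_qf n (A B : 'M[R]_n) s t : A^T = A -> B^T = B ->
  (forall x, s * qf A x <= t * qf B x) -> loewner_le (s *: A) (t *: B).
Proof.
move=> A_sym B_sym AB; split; first by rewrite linearB !linearZ /= A_sym B_sym.
by move=> x; rewrite -/(qf _ x) qfB !qfZ subr_ge0.
Qed.

Lemma loewner_le_sandwich n (A B : 'M[R]_n) s t : A^T = A -> B^T = B ->
  (forall x, s * qf A x <= qf B x <= t * qf A x) ->
  loewner_le (s *: A) B /\ loewner_le B (t *: A).
Proof.
move=> A_sym B_sym AB; rewrite -[B]scale1r.
by split; apply: loewner_le_qf => // x; rewrite mul1r; case/andP: (AB x).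
Qed.

Lemma steady_cov_sandwich n b (A B : 'M[R]_n) s t :
  (pinv A)^T = pinv A -> (pinv B)^T = pinv B ->
  (forall x, s * qf (pinv A) x <= qf (pinv B) x <= t * qf (pinv A) x) ->
  loewner_le (s *: steady_cov b A) (steady_cov b B) /\
  loewner_le (steady_cov b B) (t *: steady_cov b A).
Proof.
move=> A_sym B_sym AB.
apply: loewner_le_sandwich; rewrite ?linearZ /= ?A_sym ?B_sym //.
move=> x; have /andP[lo hi] := AB x.
by rewrite !qfZ mulrCA [t * _]mulrCA !ler_wpM2l ?divr_ge0 ?sqr_ge0.
Qed.

Lemma psd_mx0 (A : 'M[R]_0) : psd A.
Proof. by split=> [|x]; [apply/matrixP => -[] | rewrite mxE big_ord0]. Qed.

End RealMatrices.

Theorem proposition3 (R : realType) (n : nat) (adj : rel 'I_n)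
  (w0 w alpha : 'I_n -> 'I_n -> R) (b : R) :
  simple_graph adj ->
  connected_graph adj ->
  (forall i j : 'I_n, (i < j)%N -> adj i j -> 0 < w0 i j) ->
  (forall i j : 'I_n, (i < j)%N -> adj i j -> 0 <= alpha i j < 1) ->
  (forall i j : 'I_n, (i < j)%N -> adj i j ->
     (1 - alpha i j) * w0 i j <= w i j <= (1 + alpha i j) * w0 i j) ->
  b != 0 ->
  let L0 := laplacian adj w0 in
  let L := laplacian adj w in
  let Delta := laplacian adj (fun i j => alpha i j * w0 i j) in
  let a := spec_norm (pinv L0 *m Delta) in
  a < 1 ->
  let d := spec_norm (Delta *m pinv L0) in
  let eps_minus := d / (1 + d) in
  let eps_plus := d / (1 - d) in
  let Sigma0 := steady_cov b L0 in
  let Sigma := steady_cov b L in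
  (loewner_le ((1 - a) *: L0) L /\ loewner_le L ((1 + a) *: L0)) /\
  (loewner_le ((1 - eps_minus) *: Sigma0) Sigma /\
   loewner_le Sigma ((1 + eps_plus) *: Sigma0)).
Proof.
case: n adj w0 w alpha => [|k] adj w0 w alpha.
  by move=> *; split; split; apply: psd_mx0.
move=> adj_simple adj_conn w0_gt0 alphaP wP _ L0 L Delta a a_lt1 d em ep S0 S.
have w_dist (i j : 'I_k.+1) :
    (i < j)%N -> adj i j -> `|w i j - w0 i j| <= alpha i j * w0 i j.
  by move=> ij e; rewrite ler_norml; have := wP i j ij e; lra.
have w_gt0 (i j : 'I_k.+1) : (i < j)%N -> adj i j -> 0 < w i j.
  move=> ij e; have := w_dist i j ij e; have := w0_gt0 i j ij e.
  by have := alphaP i j ij e; rewrite ler_norml; nra.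
have D_psd : psd Delta.
  apply: laplacian_psd => i j ij e.
  by have := alphaP i j ij e; have := w0_gt0 i j ij e; nra.
have [L0_psd L0_pinv L0P] := laplacian_pinv adj_simple adj_conn w0_gt0.
have [L_psd L_pinv LP] := laplacian_pinv adj_simple adj_conn w_gt0.
have D_le x : qf Delta x <= a * qf L0 x.
  by apply: qf_le_spec_norm_mul; rewrite ?L0P ?centering_laplacian ?D_psd.1.
have L_bnd x : (1 - a) * qf L0 x <= qf L x <= (1 + a) * qf L0 x.
  by have := qf_laplacian_dist x w_dist; have := D_le x; rewrite ler_norml; lra.
have a_bnd : 0 <= a < 1 by rewrite spec_norm_ge0.
have d_a : d = a.
  by rewrite /d -D_psd.1 -(penrose_sym L0_psd.1 L0_pinv) -trmx_mul spec_norm_tr.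
have -> : 1 - em = (1 + a)^-1 by rewrite /em d_a; field; lra.
have -> : 1 + ep = (1 - a)^-1 by rewrite /ep d_a; field; lra.
split; first exact: loewner_le_sandwich L0_psd.1 L_psd.1 L_bnd.
apply: steady_cov_sandwich (penrose_sym L0_psd.1 L0_pinv)
  (penrose_sym L_psd.1 L_pinv) _.
exact: qf_pinv_sandwich L0_psd L_psd L0_pinv L_pinv (etrans L0P (esym LP))
  a_bnd L_bnd.
Qed.
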